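(* Let $s$ satisfy (s1)–(s2). Suppose $p$ is a measurable function on $\Omega$ with $p\le M$ for some finite $M$, and $\rho(x)\in\partial s^*(p(x),x)$ for a.e. $x\in\Omega$. Then $\rho\in L^\infty(\Omega)$ and $\rho p\in L^\infty(\Omega)$, and both bounds depend only on $s$ and $M$.
   Context: $\Omega\subset\mathbb{R}^d$ bounded smooth domain. $s:\mathbb{R}\times\Omega\to\mathbb{R}\cup\{+\infty\}$ with: (s1) $s(\cdot,x)$ proper, lower semicontinuous, convex for every $x$; (s2) $s(z,x)=+\infty$ for $z<0$, $s(0,x)=0$, $\inf_{(z,x)}s(z,x)>-\infty$, and $\lim_{z\to\infty}\inf_{x\in\Omega}s(z,x)/z=+\infty$. $s^*(p,x)=\sup_{z\in\mathbb{R}}(pz-s(z,x))$ and $\partial s^*(p,x)$ is its subdifferential in $p$. *)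

From HB Require Import structures.
From mathcomp Require Import all_boot all_order all_algebra.
From mathcomp Require Import all_classical all_reals all_analysis.
Set Implicit Arguments. Unset Strict Implicit. Unset Printing Implicit Defensive.
Import Order.TTheory GRing.Theory Num.Theory.
Import numFieldNormedType.Exports.
Local Open Scope classical_set_scope.
Local Open Scope ring_scope.
Local Open Scope ereal_scope.

Definition econvex {R : realType} (f : R -> \bar R) : Prop :=
  forall (a b t : R), (0 < t)%R -> (t < 1)%R ->
    f (t * a + (1 - t) * b)%R <= t%:E * f a + (1 - t)%:E * f b.

Definition eproper {R : realType} (f : R -> \bar R) : Prop :=
  (forall z, f z != -oo) /\ (exists z, f z \is a fin_num).

Definition conj_s {R : realType} {T : Type} (s : R -> T -> \bar R)
  (p : R) (x : T) : \bar R :=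
  ereal_sup [set (p * z)%:E - s z x | z in [set: R]].

Definition subdiff {R : realType} (g : R -> \bar R) (p : R) : set R :=
  [set r : R | g p \is a fin_num /\
     forall q : R, g p + (r * (q - p))%:E <= g q].

Definition s_hyp {R : realType} {T : Type} (Omega : set T)
  (s : R -> T -> \bar R) : Prop :=
  (forall x, Omega x ->
     eproper (s^~ x) /\ @lower_semicontinuous _ R (fun z : R => s z x) /\ econvex (s^~ x)) /\
  (forall x, Omega x -> forall z : R, (z < 0)%R -> s z x = +oo) /\
  (forall x, Omega x -> s 0%R x = 0) /\
  (-oo < ereal_inf [set s zx.1 zx.2 | zx in [set: R] `*` Omega]) /\
  ((ereal_inf [set s z x | x in Omega] * (z^-1)%:E) @[z --> +oo%R] --> +oo).

From HB Require Import structures.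
From mathcomp Require Import all_boot all_order all_algebra.
From mathcomp Require Import all_classical all_reals all_analysis.
From mathcomp Require Import lra.
Set Implicit Arguments. Unset Strict Implicit. Unset Printing Implicit Defensive.
Import Order.TTheory GRing.Theory Num.Theory.
Local Open Scope classical_set_scope.
Local Open Scope ring_scope.

(* Since s(0,x) = 0 and s(z,x) = +oo for z < 0, every conjugate s^*(.,x) is
   nonnegative and nondecreasing, with s^*(0,x) <= - inf s. Superlinear growth
   of s, uniform in x, bounds s^*(A,x) uniformly for each fixed A. A subgradient
   r of such a function at p <= M is then squeezed between 0 and
   s^*(p+1,x) - s^*(p,x) <= s^*(M+1,x), while the subgradient inequality at 0
   gives r p >= s^*(p,x) - s^*(0,x) >= inf s. *)

Lemma ereal_inf_gtNy_lbound (R : realType) (S : set (\bar R)) :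
  (-oo < ereal_inf S)%E -> exists B : R, lbound S B%:E.
Proof.
case E: (ereal_inf S) => [b| |] // _.
- by exists b; rewrite -E; apply: ereal_inf_lbound.
- exists 0 => e Se; have /ereal_inf_pinfty/(_ e Se) -> := E.
  exact: leey.
Qed.

Section Subgradient.
Variables (R : realType) (g : R -> \bar R) (p r : R).
Hypothesis g_subdiff : subdiff g p r.

Lemma subdiff_fine_le q (c : R) :
  (g q <= c%:E)%E -> fine (g p) + r * (q - p) <= c.
Proof.
case: g_subdiff => gp_fin sub gqc.
by rewrite -lee_fin EFinD fineK //; apply: le_trans gqc.
Qed.

Lemma subdiff_ge0 : {homo g : q q' / q <= q' >-> (q <= q')%E} -> 0 <= r.
Proof.
move=> g_mono; have := @subdiff_fine_le (p - 1) (fine (g p)).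
rewrite fineK; last exact: g_subdiff.1.
have pp : p - 1 <= p by rewrite gerBl.
by move=> /(_ (g_mono _ _ pp)); lra.
Qed.

Lemma subdiff_ub (K : R) :
  (forall q, 0 <= g q)%E -> (g (p + 1) <= K%:E)%E -> r <= K.
Proof.
move=> g_ge0 /subdiff_fine_le; have := fine_ge0 (g_ge0 p).
by rewrite addrAC subrr add0r mulr1; lra.
Qed.

Lemma subdiff_mul_lb (c : R) : (0 <= g p)%E -> (g 0 <= c%:E)%E -> - c <= r * p.
Proof.
move=> /fine_ge0 gp_ge0 /subdiff_fine_le.
by rewrite sub0r mulrN; lra.
Qed.

Lemma subdiff_bounds (M K c : R) :
  (forall q, 0 <= g q)%E -> {homo g : q q' / q <= q' >-> (q <= q')%E} ->
  (g (M + 1) <= K%:E)%E -> (g 0 <= c%:E)%E -> p <= M ->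
  `|r| <= K /\ `|r * p| <= Num.max (K * `|M|) c.
Proof.
move=> g_ge0 g_mono gK gc pM.
have r_ge0 := subdiff_ge0 g_mono.
have rK : r <= K.
  apply: (subdiff_ub g_ge0); apply: le_trans gK.
  by apply: g_mono; rewrite lerD2r.
have rp_lb := subdiff_mul_lb (g_ge0 p) gc.
have rp_ub : r * p <= K * `|M|.
  apply: le_trans (ler_wpM2l r_ge0 (le_trans pM (ler_norm M))) _.
  exact: ler_wpM2r.
split; first by rewrite ger0_norm.
rewrite ler_norml le_max rp_ub andbT.
by rewrite lerNl le_max [_ <= c]lerNl rp_lb orbT.
Qed.
End Subgradient.

Section Conjugate.
Variables (R : realType) (T : Type) (s : R -> T -> \bar R) (x : T).
Hypothesis s0 : s 0 x = 0%E.
Hypothesis s_neg : forall z, z < 0 -> s z x = +oo%E.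

Lemma conj_s_ge0 q : (0 <= conj_s s q x)%E.
Proof.
by apply: ereal_sup_ubound; exists 0 => //; rewrite s0 mulr0 sube0.
Qed.

Lemma conj_s_nondecreasing :
  {homo conj_s s ^~ x : q q' / q <= q' >-> (q <= q')%E}.
Proof.
move=> q q' qq'; apply: ge_ereal_sup => _ [z _ <-].
have [z_lt0|z_ge0] := ltP z 0; first by rewrite s_neg //= leNye.
apply: le_trans (ereal_sup_ubound _); last by exists z.
by apply: leeB => //; rewrite lee_fin ler_wpM2r.
Qed.

Lemma conj_s0_le (B : R) :
  (forall z, B%:E <= s z x)%E -> (conj_s s 0 x <= (- B)%:E)%E.
Proof.
move=> sB; apply: ge_ereal_sup => _ [z _ <-].
by rewrite mul0r EFinN -(sub0e B%:E); apply: leeB.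
Qed.

(* Split z >= 0 at Z: below Z the sup is at most A Z - B, above Z the
   growth bound makes A z - s(z,x) <= - z <= 0. *)
Lemma conj_s_le (A B Z : R) : 0 <= A -> 0 <= Z ->
  (forall z, B%:E <= s z x)%E ->
  (forall z, Z < z -> (((A + 1) * z)%:E <= s z x)%E) ->
  (conj_s s A x <= (A * Z - B)%:E)%E.
Proof.
move=> A_ge0 Z_ge0 sB sZ.
have B_le0 : B <= 0 by have := sB 0; rewrite s0 lee_fin.
have AZ_ge0 : 0 <= A * Z by rewrite mulr_ge0.
apply: ge_ereal_sup => _ [z _ <-].
have [z_lt0|z_ge0] := ltP z 0; first by rewrite s_neg //= leNye.
have [z_leZ|Z_lt_z] := leP z Z.
  by rewrite EFinB; apply: leeB => //; rewrite lee_fin ler_wpM2l.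
apply: le_trans (leeB (lexx _) (sZ _ Z_lt_z)) _.
by rewrite -EFinB lee_fin; lra.
Qed.
End Conjugate.

Section SHyp.
Variables (R : realType) (T : Type) (Omega : set T) (s : R -> T -> \bar R).
Hypothesis hs : s_hyp Omega s.

Lemma s_hyp_lbound : exists B : R, forall x, Omega x -> forall z, (B%:E <= s z x)%E.
Proof.
have [B B_lb] := ereal_inf_gtNy_lbound hs.2.2.2.1.
by exists B => x Ox z; apply: B_lb; exists (z, x).
Qed.

Lemma s_hyp_superlinear (A : R) : exists Z : R, 0 <= Z /\
  forall x, Omega x -> forall z, Z < z -> ((A * z)%:E <= s z x)%E.
Proof.
have [Z0 [_ growth]] := cvgey_ge hs.2.2.2.2 A.
exists (Num.max Z0 0); split => [|x Ox z]; first by rewrite le_max lexx orbT.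
rewrite gt_max => /andP[/growth + z_gt0]; rewrite lee_pdivlMr // EFinM.
by move=> /le_trans; apply; apply: ereal_inf_lbound; exists x.
Qed.
End SHyp.

Theorem lemma2p14 (d : measure_display) (T : measurableType d) (R : realType)
  (mu : {measure set T -> \bar R}) (Omega : set T) (mOmega : measurable Omega)
  (s : R -> T -> \bar R) (hs : s_hyp Omega s) (M : R) :
  exists C1 C2 : R,
    forall p rho : T -> R,
      measurable_fun Omega p ->
      measurable_fun Omega rho ->
      {ae mu, forall x, Omega x -> p x <= M} ->
      {ae mu, forall x, Omega x -> subdiff (conj_s s ^~ x) (p x) (rho x)} ->
      {ae mu, forall x, Omega x -> `|rho x| <= C1} /\
      {ae mu, forall x, Omega x -> `|rho x * p x| <= C2}.
Proof.
have [_ [s_neg [s0 _]]] := hs.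
have [B sB] := s_hyp_lbound hs.
pose A : R := `|M| + 1.
have A_ge0 : 0 <= A by rewrite addr_ge0.
have M1_le_A : M + 1 <= A by rewrite lerD2r ler_norm.
have [Z [Z_ge0 sZ]] := s_hyp_superlinear hs (A + 1).
pose K : R := A * Z - B.
exists K, (Num.max (K * `|M|) (- B)) => p rho _ _ pM rho_sub.
suff bounds : {ae mu, forall x, Omega x ->
    `|rho x| <= K /\ `|rho x * p x| <= Num.max (K * `|M|) (- B)}.
  by split; apply: filterS bounds => x b /b[].
apply: filterS2 pM rho_sub => x pMx rho_subx Ox.
apply: (subdiff_bounds (rho_subx Ox) (K := K) (c := - B)) (pMx Ox).
- exact: conj_s_ge0 (s0 x Ox).
- exact: conj_s_nondecreasing (s_neg x Ox).
- apply: le_trans (conj_s_nondecreasing (s_neg x Ox) M1_le_A) _.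
  exact: (conj_s_le (s0 x Ox) (s_neg x Ox) A_ge0 Z_ge0 (sB x Ox) (sZ x Ox)).
- exact: (conj_s0_le (sB x Ox)).
Qed.
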